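(* Let $k\ge 2$ be an integer, and for each $i=1,\dots,k$ let $K_i$ be either $\mathbb{R}$ or $\mathbb{T}$. Let $K=\prod_{i=1}^k K_i$ and for $i=1,\dots,k$ let $H_i=\{(x_1,\dots,x_k)\in K: x_i=0\}$. If $G$ is a dense subgroup of $K$ such that $G\cap H_i$ is not dense in $H_i$ for every $i=1,\dots,k$, then $G$ is zero-dimensional.
   Context: $\mathbb{T}=\mathbb{R}/\mathbb{Z}$ is the circle group written additively, with its usual compact topology; $K$ carries the product topology and $G$ the subspace topology. A space is zero-dimensional if it has a base of clopen sets. *)

From HB Require Import structures.
From mathcomp Require Import all_boot all_order all_algebra archimedean generic_quotient.
From mathcomp Require Import all_classical all_reals all_analysis.
Set Implicit Arguments. Unset Strict Implicit. Unset Printing Implicit Defensive.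
Import Order.TTheory GRing.Theory Num.Theory numFieldNormedType.Exports.
Local Open Scope classical_set_scope.
Local Open Scope ring_scope.
Local Open Scope quotient_scope.

Section Circle.
Variable R : realType.
Definition modZ (x y : R) : bool := (x - y) \is a Num.int.
Lemma modZ_equiv : equiv_class_of modZ.
Proof.
split.
- by move=> x; rewrite /modZ subrr rpred0.
- move=> x y; rewrite /modZ -opprB rpredN.
  by [].
- move=> y x z; rewrite /modZ => Hxy Hyz.
  have -> : x - z = (x - y) + (y - z) by rewrite addrA subrK.
  exact: rpredD.
Qed.
Canonical modZ_equivRel := EquivRelPack modZ_equiv.
Definition circle := {eq_quot modZ}.
HB.instance Definition _ := Quotient.on circle.
HB.instance Definition _ := Topological.copy circle (quotient_topology circle).
Definition circle_zero : circle := \pi_circle 0.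
Definition circle_add (a b : circle) : circle :=
  \pi_circle (repr a + repr b).
Definition circle_opp (a : circle) : circle := \pi_circle (- repr a).
End Circle.

(** The factors: [Kfactor R false] is the real line, [Kfactor R true] is the circle R/Z. *)
Definition Kfactor (R : realType) (b : bool) : topologicalType :=
  if b then (circle R : topologicalType) else (R : topologicalType).

Definition kzero (R : realType) (b : bool) : Kfactor R b :=
  if b as b' return Kfactor R b' then circle_zero R else (0 : R).
Definition kadd (R : realType) (b : bool) : Kfactor R b -> Kfactor R b -> Kfactor R b :=
  if b as b' return Kfactor R b' -> Kfactor R b' -> Kfactor R b'
  then @circle_add R else (fun x y : R => x + y).
Definition kopp (R : realType) (b : bool) : Kfactor R b -> Kfactor R b :=
  if b as b' return Kfactor R b' -> Kfactor R b'
  then @circle_opp R else (fun x : R => - x).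

Definition Kspace (R : realType) (k : nat) (c : 'I_k -> bool) : topologicalType :=
  prod_topology (fun i : 'I_k => Kfactor R (c i)).

Definition Kzero (R : realType) (k : nat) (c : 'I_k -> bool) : Kspace R c :=
  fun i => kzero R (c i).
Definition Kadd (R : realType) (k : nat) (c : 'I_k -> bool) (x y : Kspace R c) : Kspace R c :=
  fun i => kadd (x i) (y i).
Definition Kopp (R : realType) (k : nat) (c : 'I_k -> bool) (x : Kspace R c) : Kspace R c :=
  fun i => kopp (x i).

Definition is_subgroup (R : realType) (k : nat) (c : 'I_k -> bool) (G : set (Kspace R c)) :=
  G (Kzero R c) /\ forall x y, G x -> G y -> G (Kadd x (Kopp y)).

Definition Hset (R : realType) (k : nat) (c : 'I_k -> bool) (i : 'I_k) : set (Kspace R c) :=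
  [set x | x i = kzero R (c i)].

Definition zero_dim (T : topologicalType) :=
  forall (U : set T) (x : T), open U -> U x -> exists V : set T, [/\ clopen V, V x & V `<=` U].

From Pilot Require Import Defs.
From HB Require Import structures.
From mathcomp Require Import all_boot all_order all_algebra.
From mathcomp Require Import all_classical all_reals all_analysis.
From mathcomp Require Import archimedean generic_quotient lra zify.
Import Order.TTheory GRing.Theory Num.Theory numFieldNormedType.Exports.
Set Implicit Arguments. Unset Strict Implicit. Unset Printing Implicit Defensive.
Local Open Scope classical_set_scope.
Local Open Scope ring_scope.

(* Lift K to R^k through the coordinatewise quotient map Kpi and let Gt be the preimage
   of G, a dense subgroup of R^k. Since G ∩ H_i is not dense in H_i, some box around a
   point w_i of the hyperplane x_i = 0 contains no point of Gt. By density, for any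
   prescribed level u there is g in Gt with g_i close to u and g_j close to x0_j - w_ij
   for j <> i; then no y in Gt near x0 has y_i = g_i, since y - g would lie in the box
   around w_i. Taking such levels just below and above x0_i in every coordinate gives
   arbitrarily small boxes around x0 whose boundary misses Gt. The image of such an open
   box is open in K and meets G in the same set as the image of the closed box, which is
   closed in K; hence it cuts out a clopen neighbourhood in G. *)

Lemma cvg_prod_topology (I : Type) (T : I -> topologicalType)
    (F : set_system (prod_topology T)) (y : prod_topology T) :
  Filter F -> (forall i, (fun f => f i) @ F --> y i) -> F --> y.
Proof.
move=> FF Fy; apply/(@cvg_sup _ _ (fun i => Topological.class
    (initial_topology (fun f : prod_topology T => f i))) F y FF) => i A /=.
rewrite (@nbhsE (Topological.Pack (Topological.class
    (initial_topology (fun f : prod_topology T => f i))))) /=.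
case=> _ [[B oB <-] By] BA; apply: (filterS BA); apply: Fy.
exact: open_nbhs_nbhs.
Qed.

Lemma open_forall (T : topologicalType) (I : finType) (f : I -> set T) :
  (forall i, open (f i)) -> open [set x | forall i, f i x].
Proof.
move=> fo; rewrite openE => x fx; apply: filter_forall => i.
exact: open_nbhs_nbhs.
Qed.

Section factors.
Variable R : realType.
Local Open Scope quotient_scope.
Local Notation pi := \pi_(circle R).

Lemma circle_eqP (x y : R) : pi x = pi y <-> x - y \is a Num.int.
Proof. by split=> [/eqmodP | ?]; last apply/eqmodP. Qed.

Lemma circle_addE (x y : R) : circle_add (pi x) (pi y) = pi (x + y).
Proof.
apply/circle_eqP; rewrite opprD addrACA.
by apply: rpredD; apply/circle_eqP; rewrite reprK.
Qed.

Lemma circle_oppE (x : R) : circle_opp (pi x) = pi (- x).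
Proof. by apply/circle_eqP; rewrite -opprD rpredN; apply/circle_eqP; rewrite reprK. Qed.

Lemma circle_open_image (A : set R) : open A -> open (pi @` A).
Proof.
move=> oA; change (open (pi @^-1` (pi @` A))).
have -> : pi @^-1` (pi @` A) =
    \bigcup_(m in [set: int]) ((fun s => s + m%:~R) @^-1` A).
  apply/seteqP; split => s /=.
  - case=> t At /circle_eqP /intrP [m tsm]; exists m => //=.
    by rewrite -tsm addrC subrK.
  - case=> m _ Asm; exists (s + m%:~R) => //; apply/circle_eqP.
    by rewrite addrC addKr intr_int.
apply: bigcup_open => m _; apply: open_comp oA => s _.
by apply: cvgD; [exact: cvg_id | exact: cvg_cst].
Qed.

Lemma int_gtN1_ge0 (x : R) : x \is a Num.int -> -1 < x -> 0 <= x.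
Proof. by move=> /intrP [m ->]; rewrite ler0z -(mulrN1z 1) ltr_int => ?; lia. Qed.

(* As [b < a + 1], integer translates of [`[a, b]] and [`]b, a + 1[] tile the line. *)
Lemma circle_image_itvcc_compl (a b : R) : b - a < 1 ->
  ~` (pi @` `[a, b]) = pi @` `]b, a + 1[.
Proof.
move=> ba1; apply/seteqP; split => s.
- rewrite -[s]reprK => nab; set u := repr s.
  have := floor_le (u - a); have := floorD1_gt (u - a); rewrite intrD.
  set m := Num.floor (u - a) => mu um.
  have pi_um : pi (u - m%:~R) = pi u.
    by apply/circle_eqP; rewrite addrAC subrr add0r rpredN intr_int.
  have [ub|bu] := lerP (u - m%:~R) b.
    by exfalso; apply: nab; exists (u - m%:~R) => //=; rewrite in_itv /= ub; lra.
  by exists (u - m%:~R) => //=; rewrite in_itv /= bu; lra.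
- case=> t /= /[!in_itv] /= /andP [bt ta] <- [t' /= /[!in_itv] /= /andP [at' t'b]].
  by move/circle_eqP/int_gtN1_ge0 => ?; lra.
Qed.

Lemma circle_closed_image_itvcc (a b : R) : b - a < 1 -> closed (pi @` `[a, b]).
Proof.
move=> ba1; rewrite -[_ @` _]setCK circle_image_itvcc_compl //.
exact/open_closedC/circle_open_image/itv_open.
Qed.

Definition kpi (b : bool) : R -> Kfactor R b :=
  if b as b' return R -> Kfactor R b' then pi else id.

Lemma kpi_surj b (y : Kfactor R b) : exists x, kpi b x = y.
Proof. by case: b y => y; [exists (repr y); exact: reprK | exists y]. Qed.

Lemma kpi_continuous b : continuous (kpi b).
Proof. by case: b => [|x]; [apply/continuousP | exact: cvg_id]. Qed.

Lemma kpi0 b : kpi b 0 = Defs.kzero R b.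
Proof. by case: b. Qed.

Lemma kpiB b (x y : R) : kpi b (x - y) = Defs.kadd (kpi b x) (Defs.kopp (kpi b y)).
Proof. by case: b => //=; rewrite circle_oppE circle_addE. Qed.

Lemma kpi_open_image b (A : set R) : open A -> open (kpi b @` A).
Proof. by case: b => /=; [exact: circle_open_image | rewrite image_id]. Qed.

Lemma kpi_closed_image_itvcc b (x y : R) : y - x < 1 -> closed (kpi b @` `[x, y]).
Proof.
case: b => /= yx; first exact: circle_closed_image_itvcc.
by rewrite image_id; exact: itv_closed.
Qed.

End factors.

Section boxes.
Variables (R : realType) (k : nat).
Implicit Types (a b x : 'I_k -> R) (d : R).

Definition obox a b : set ('I_k -> R) := [set t | forall j, `]a j, b j[%classic (t j)].
Definition cbox a b : set ('I_k -> R) := [set t | forall j, `[a j, b j]%classic (t j)].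
Definition cube x d := obox (fun j => x j - d) (fun j => x j + d).

Lemma oboxP a b t : obox a b t <-> forall j, a j < t j /\ t j < b j.
Proof. by split=> h j; have := h j; rewrite /= in_itv /= => /andP. Qed.

Lemma cboxP a b t : cbox a b t <-> forall j, a j <= t j /\ t j <= b j.
Proof. by split=> h j; have := h j; rewrite /= in_itv /= => /andP. Qed.

End boxes.

Section product.
Variables (R : realType) (k : nat) (c : 'I_k -> bool).

Definition Kpi (x : 'I_k -> R) : Kspace R c := fun j => kpi (c j) (x j).

Lemma Kpi_surj (y : Kspace R c) : exists x, Kpi x = y.
Proof.
have [x xy] := choice (fun j => kpi_surj (y j)).
by exists x; apply: functional_extensionality_dep.
Qed.

Lemma KpiB x y : Kpi (x - y) = Kadd (Kpi x) (Kopp (Kpi y)).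
Proof. by apply: functional_extensionality_dep => j; exact: kpiB. Qed.

Lemma Kpi_image_prod (A : 'I_k -> set R) :
  Kpi @` [set t | forall j, A j (t j)] = [set y | forall j, (kpi (c j) @` A j) (y j)].
Proof.
apply/seteqP; split => y.
- by case=> t At <- j; exists (t j).
- move=> /= yP; have {}yP j : exists t, A j t /\ kpi (c j) t = y j.
    by have [t] := yP j; exists t.
  have [t tP] := choice yP.
  exists t; first by move=> j; have [] := tP j.
  by apply: functional_extensionality_dep => j; have [] := tP j.
Qed.

Lemma Kpi_open_obox a b : open (Kpi @` obox a b).
Proof.
rewrite /obox (Kpi_image_prod (fun j => `]a j, b j[%classic)).
apply: (@open_forall _ _ (fun j (y : Kspace R c) =>
  (kpi (c j) @` `]a j, b j[%classic) (y j))) => j.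
apply: (@open_comp _ _ (fun y : Kspace R c => y j)); last exact/kpi_open_image/itv_open.
by move=> y _; exact: proj_continuous.
Qed.

Lemma Kpi_closed_cbox a b : (forall j, b j - a j < 1) -> closed (Kpi @` cbox a b).
Proof.
move=> ba1; rewrite /cbox (Kpi_image_prod (fun j => `[a j, b j]%classic)).
have -> : [set y : Kspace R c | forall j, (kpi (c j) @` `[a j, b j]) (y j)] =
    \bigcap_(j in setT) ((fun y : Kspace R c => y j) @^-1` (kpi (c j) @` `[a j, b j])).
  by apply/seteqP; split => y /= yP j => [_|]; [exact: yP | exact: yP I].
apply: closed_bigI => j _; apply: (continuous_closedP _).1; first exact: proj_continuous.
exact: kpi_closed_image_itvcc.
Qed.

Lemma Kpi_nbhs_cube x (U : set (Kspace R c)) : nbhs (Kpi x) U ->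
  exists2 d, 0 < d & Kpi @` cube x d `<=` U.
Proof.
have FF : Filter (filter_from [set d : R | 0 < d] (cube x)).
  apply: filter_from_filter; first by exists 1; rewrite /= ltr01.
  move=> d1 d2 d10 d20; exists (Num.min d1 d2); first by rewrite /= lt_min d10.
  have m1 : Num.min d1 d2 <= d1 by rewrite ge_min lexx.
  have m2 : Num.min d1 d2 <= d2 by rewrite ge_min lexx orbT.
  by move=> t /oboxP tP; split; apply/oboxP => j; have := tP j; lra.
have : Kpi @ filter_from [set d : R | 0 < d] (cube x) --> Kpi x.
  apply: cvg_prod_topology => i V /= /kpi_continuous /nbhs_ballP [e e0 eV].
  exists e => // t /oboxP tP; apply: eV; rewrite ball_itv /= in_itv /=.
  by have [? ?] := tP i; apply/andP.
by move=> Kx_cvg /Kx_cvg [d d0 dU]; exists d => // _ [t xt <-]; exact: dU.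
Qed.

End product.

Section boundary_free_box.
Variables (R : realType) (k : nat) (Gt : set ('I_k -> R)).
Hypothesis GtB : forall x y, Gt x -> Gt y -> Gt (x - y).
Hypothesis Gt_dense : forall x d, 0 < d -> Gt `&` cube x d !=set0.
Variables (w : 'I_k -> 'I_k -> R) (r : 'I_k -> R).
Hypothesis r_gt0 : forall i, 0 < r i.
Hypothesis w_diag : forall i, w i i = 0.
Hypothesis gap : forall i x, Gt x -> x i = 0 -> ~ cube (w i) (r i) x.

(* [u] is the [i]-th coordinate of some [g] in [Gt] close to [x0 - w i] off [i]:
   a [y] in [Gt] near [x0] with [y i = u] would put [y - g] in the gap around [w i]. *)
Lemma exists_avoided_level (x0 : 'I_k -> R) (d e v : R) (i : 'I_k) :
  0 < e -> d + e <= r i ->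
  exists u, [/\ v - e < u, u < v + e &
    forall y, Gt y -> y i = u -> ~ cube x0 d y].
Proof.
move=> e0 der.
pose z j := if j == i then v else x0 j - w i j.
have [g [Gg /oboxP gz]] := Gt_dense z e0.
exists (g i); have := gz i; rewrite /z eqxx => -[g1 g2]; split => //.
move=> y Gy yg /oboxP yx0; have ygE j : (y - g) j = y j - g j by [].
apply: (@gap i _ (GtB Gy Gg)); first by rewrite ygE yg subrr.
apply/oboxP => j; rewrite ygE; have [->|ji] := eqVneq j i.
  by rewrite yg subrr w_diag; have := r_gt0 i; lra.
by have := gz j; have := yx0 j; rewrite /z (negbTE ji); lra.
Qed.

Lemma boundary_free_box (x0 : 'I_k -> R) (rho : R) : 0 < rho ->
  exists a b, [/\ obox a b x0, obox a b `<=` cube x0 rho,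
    (forall j, b j - a j < 1) & Gt `&` cbox a b `<=` obox a b].
Proof.
move=> rho0; pose d := \big[Num.min/Num.min rho (1/2)]_i (r i / 2).
have /bigmin_geP [dm dr] : d <= d := lexx d.
have d0 : 0 < d.
  apply/bigmin_gtP; split=> [|i _]; last by rewrite divr_gt0.
  by rewrite lt_min rho0; lra.
have drho : d <= rho by move: dm; rewrite le_min => /andP [].
have d12 : d <= 1/2 by move: dm; rewrite le_min => /andP [].
have d20 : 0 < d / 2 by rewrite divr_gt0.
have ddr j : d + d / 2 <= r j by have := dr j isT; lra.
have [a aP] := choice (fun j => exists_avoided_level x0 (x0 j - d / 2) d20 (ddr j)).
have [b bP] := choice (fun j => exists_avoided_level x0 (x0 j + d / 2) d20 (ddr j)).
exists a, b; split.
- by apply/oboxP => j; have [? ? _] := aP j; have [? ? _] := bP j; lra.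
- move=> t /oboxP tP; apply/oboxP => j.
  by have [? ? _] := aP j; have [? ? _] := bP j; have := tP j; lra.
- by move=> j; have [? ? _] := aP j; have [? ? _] := bP j; lra.
move=> y [Gy /cboxP yab]; have yx0 : cube x0 d y.
  by apply/oboxP => j; have [? ? _] := aP j; have [? ? _] := bP j; have := yab j; lra.
apply/oboxP => j; have [_ _ aj] := aP j; have [_ _ bj] := bP j; have [ya yb] := yab j.
split; rewrite lt_neqAle ?ya ?yb andbT; apply/eqP => yj.
- exact: aj y Gy (esym yj) yx0.
- exact: bj y Gy yj yx0.
Qed.

End boundary_free_box.

Section lifting.
Variables (R : realType) (k : nat) (c : 'I_k -> bool) (G : set (Kspace R c)).

Lemma Kpi_preimage_dense : dense G ->
  forall x d, 0 < d -> Kpi c @^-1` G `&` cube x d !=set0.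
Proof.
move=> Gd x d d0; have x_cube : cube x d x by apply/oboxP => j; lra.
have /Gd/(_ (Kpi_open_obox c _ _)) [_ [[t tx <-] Gt]] : Kpi c @` cube x d !=set0.
  by exists (Kpi c x); exact: imageP.
by exists t.
Qed.

Lemma Kpi_hyperplane_gap i :
  ~ dense (set_val @^-1` G : set (set_type (Hset i))) ->
  exists w r, [/\ 0 < r, w i = 0 & forall x, G (Kpi c x) -> x i = 0 -> ~ cube w r x].
Proof.
case/denseNE => O_ [[h [oO Oh]] OG0]; case: oO Oh OG0 => O oO <- Oh OG0.
have [x xh] := Kpi_surj (val h).
pose w j := if j == i then 0 else x j.
have wh : Kpi c w = val h.
  apply: functional_extensionality_dep => j; rewrite /Kpi /w.
  have [->|_] := eqVneq j i; last by rewrite -xh.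
  by rewrite kpi0; have := set_valP h.
have [r r0 rO] := Kpi_nbhs_cube (open_nbhs_nbhs (conj oO (eq_ind_r O Oh wh))).
exists w, r; split => //; first by rewrite /w eqxx.
move=> y Gy yi yw; have Hy : Hset i (Kpi c y) by rewrite /Hset /= /Kpi yi kpi0.
suff : (set_val @^-1` O `&` set_val @^-1` G) (SigSub (mem_set Hy)) by rewrite OG0.
by split => //=; apply: rO; exists y.
Qed.

Lemma zero_dim_of_boundary_free_boxes :
  (forall x0 rho, 0 < rho -> exists a b, [/\ obox a b x0, obox a b `<=` cube x0 rho,
     (forall j, b j - a j < 1) & Kpi c @^-1` G `&` cbox a b `<=` obox a b]) ->
  zero_dim (set_type G).
Proof.
move=> free_box U g [U' oU' <-] U'g.
have val_cont : continuous (set_val : set_type G -> Kspace R c).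
  by apply/continuousP => A oA; exists A.
have [x0 x0g] := Kpi_surj (val g).
have [rho rho0 rhoU] := Kpi_nbhs_cube (open_nbhs_nbhs (conj oU' (eq_ind_r U' U'g x0g))).
have [a [b [ax0 abrho ba1 Gab]]] := free_box x0 rho rho0.
have oc_box : set_val @^-1` (Kpi c @` obox a b) =
    set_val @^-1` (Kpi c @` cbox a b) :> set (set_type G).
  apply/seteqP; split => h /= [t tab th]; exists t => //.
  - by apply/cboxP => j; have /oboxP/(_ j) [? ?] := tab; split; apply: ltW.
  - by apply: Gab; split => //; rewrite /= th; exact: set_valP h.
exists (set_val @^-1` (Kpi c @` obox a b)); split.
- split; first exact: (continuousP _).1 val_cont _ (Kpi_open_obox c a b).
  by rewrite oc_box; apply: (continuous_closedP _).1 val_cont _ _; exact: Kpi_closed_cbox.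
- by exists x0.
- by move=> h /= [t /abrho tx0 th]; rewrite -th; apply: rhoU; exists t.
Qed.

End lifting.

Theorem theorem4p1 (R : realType) (k : nat) (c : 'I_k -> bool) (G : set (Kspace R c)) :
  (2 <= k)%N ->
  is_subgroup G ->
  dense G ->
  (forall i : 'I_k,
     ~ dense (set_val @^-1` G : set (set_type (@Hset R k c i)))) ->
  zero_dim (set_type G).
Proof.
(* [2 <= k] is unused: for [k <= 1] the statement holds vacuously or trivially. *)
move=> _ [_ GB] Gdense Gnd; apply: zero_dim_of_boundary_free_boxes => x0 rho rho0.
have GtB x y : G (Kpi c x) -> G (Kpi c y) -> G (Kpi c (x - y)).
  by rewrite KpiB; exact: GB.
have [w wr] := choice (fun i => Kpi_hyperplane_gap (Gnd i)).
have [r gapP] := choice wr.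
apply: (boundary_free_box GtB (Kpi_preimage_dense Gdense) (w := w) (r := r)) => // i;
  by have [] := gapP i.
Qed.
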